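(* Let $\kappa$ be a regular infinite cardinal, $I$ a nonempty set, $(S,\Sigma_S)$ a $\kappa$-measurable space separating points. The $\kappa$-description map $D:\Omega\to\Omega$ of the $\kappa$-type space $\langle\Omega,\Sigma_\Omega,(T_i^* )_{i\in I},\theta^*\rangle$ is the identity.
   Context: A $\kappa$-field on a nonempty set is a field closed under intersections of fewer than $\kappa$ members. $\Delta^\kappa(M,\Sigma)$: finitely additive probability measures on $(M,\Sigma)$ with the $\kappa$-field generated by $\{\mu:\mu(E)\ge p\}$. ''Separating points'': for $s\neq s'$ in $S$ some $E\in\Sigma_S$ contains $s$ but not $s'$. A $\kappa$-type space on $S$ for $I$ is $\langle M,\Sigma,(T_i)_{i\in I},\theta\rangle$ with $\Sigma$ a $\kappa$-field on nonempty $M$, each $T_i:M\to\Delta^\kappa(M,\Sigma)$ measurable with: $\{m':T_i(m')=T_i(m)\}\subseteq A\in\Sigma$ implies $T_i(m)(A)=1$; and $\theta:M\to S$ measurable. $\kappa$-expressions $\Phi^\kappa$: least set containing each $E\in\Sigma_S$ and closed under $\neg$, $B_i^p$ ($i\in I$, $p\in[0,1]$), and conjunctions of fewer than $\kappa$ (nonempty) expressions. Semantics: $E^{\underline M}=\theta^{-1}(E)$, complement, $(B_i^p\varphi)^{\underline M}=\{m:T_i(m)(\varphi^{\underline M})\ge p\}$, intersection. $D(m)=\{\varphi:m\in\varphi^{\underline M}\}$ is the $\kappa$-description of $m$. $\Omega$ = set of all $D(m)$ over all states of all $\kappa$-type spaces on $S$ for $I$; $[\varphi]=\{\omega\in\Omega:\varphi\in\omega\}$;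 $\Sigma_\Omega=\{[\varphi]\}$; $T_i^*(\omega)([\varphi])=\sup\{p:B_i^p(\varphi)\in\omega\}$; $\theta^*(\omega)$ the unique $s\in S$ lying in every $E\in\Sigma_S\cap\omega$. This tuple is a $\kappa$-type space on $S$ for $I$. *)

From HB Require Import structures.
From mathcomp Require Import all_boot all_order all_algebra.
From mathcomp Require Import boolp classical_sets functions cardinality reals.
From Stdlib Require Import ClassicalEpsilon.
Unset Printing Implicit Defensive.
Import Order.TTheory GRing.Theory Num.Theory.
Local Open Scope classical_set_scope.
Local Open Scope ring_scope.
Local Open Scope card_scope.

Definition card_lt {T U} (A : set T) (B : set U) := A #<= B /\ ~ (B #<= A).

(** The cardinal kappa is represented as the cardinality of a type [K]:
    "fewer than kappa" means "of cardinality strictly less than |K|". *)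
Definition lt_kappa (K : Type) {T} (A : set T) := card_lt A [set: K].

Definition regular_infinite_cardinal (K : Type) :=
  infinite_set [set: K] /\
  forall (J : set K) (X : K -> set K),
    lt_kappa K J -> (forall j, J j -> lt_kappa K (X j)) ->
    lt_kappa K (\bigcup_(j in J) X j).

(** Families of size < kappa are indexed by
    subsets of K of size < kappa. *)
Definition kfield (K : Type) {T} (X : set T) (F : set (set T)) :=
  [/\ X !=set0,
      (forall E, F E -> E `<=` X),
      F X,
      (forall E, F E -> F (X `\` E)) &
      (forall (A : set K) (G : K -> set T), A !=set0 -> lt_kappa K A ->
         (forall a, A a -> F (G a)) -> F (\bigcap_(a in A) G a))].

Definition kgen (K : Type) {T} (X : set T) (G : set (set T)) : set (set T) :=
  [set E | forall F, kfield K X F -> G `<=` F -> F E].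

(** Finitely additive probability measures on (M, Sig), represented as
    functions on all subsets of M vanishing outside Sig (so that they are
    determined by their values on Sig). *)
Definition fa_prob {R : realType} {M : Type} (Sig : set (set M))
    (mu : set M -> R) :=
  [/\ mu setT = 1,
      (forall E, Sig E -> 0 <= mu E),
      (forall E F, Sig E -> Sig F -> E `&` F = set0 -> mu (E `|` F) = mu E + mu F) &
      (forall E, ~ Sig E -> mu E = 0)].

Definition Delta (R : realType) {M : Type} (Sig : set (set M)) : set (set M -> R) :=
  [set mu | fa_prob Sig mu].

Definition Delta_gens (R : realType) {M : Type} (Sig : set (set M))
  : set (set (set M -> R)) :=
  [set Y | exists E (p : R), [/\ Sig E, 0 <= p <= 1 &
           Y = [set mu | Delta R Sig mu /\ p <= mu E]]].

Definition Delta_field (K : Type) (R : realType) {M : Type} (Sig : set (set M)) :=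
  kgen K (Delta R Sig) (Delta_gens R Sig).

Definition ktype_space (K : Type) {R : realType} {S : Type} (SigS : set (set S))
    {I : Type} {M : Type} (Sig : set (set M)) (T : I -> M -> set M -> R)
    (theta : M -> S) :=
  [/\ kfield K [set: M] Sig,
      (forall i m, Delta R Sig (T i m)),
      (forall i Y, Delta_field K R Sig Y -> Sig (T i @^-1` Y)),
      (forall i m A, Sig A -> [set m' | T i m' = T i m] `<=` A -> T i m A = 1) &
      (forall E, SigS E -> Sig (theta @^-1` E))].

Inductive kexpr (K : Type) (R : realType) (S : Type) (I : Type) : Type :=
| Atom of set S
| Neg of kexpr K R S I
| Bel of I & R & kexpr K R S I
| Conj of set K & (K -> kexpr K R S I).

Arguments Atom {K R S I}.
Arguments Neg {K R S I}.
Arguments Bel {K R S I}.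
Arguments Conj {K R S I}.

Inductive wf_expr {K : Type} {R : realType} {S : Type} (SigS : set (set S))
    {I : Type} : kexpr K R S I -> Prop :=
| wf_Atom E : SigS E -> wf_expr SigS (Atom E)
| wf_Neg phi : wf_expr SigS phi -> wf_expr SigS (Neg phi)
| wf_Bel i p phi : 0 <= p <= 1 -> wf_expr SigS phi -> wf_expr SigS (Bel i p phi)
| wf_Conj (A : set K) f : A !=set0 -> lt_kappa K A ->
    (forall a, A a -> wf_expr SigS (f a)) -> wf_expr SigS (Conj A f).

Fixpoint sem {K : Type} {R : realType} {S I M : Type} (T : I -> M -> set M -> R)
    (theta : M -> S) (phi : kexpr K R S I) : set M :=
  match phi with
  | Atom E => theta @^-1` E
  | Neg psi => ~` sem T theta psi
  | Bel i p psi => [set m | p <= T i m (sem T theta psi)]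
  | Conj A f => [set m | forall a, A a -> sem T theta (f a) m]
  end.

Definition descr {K : Type} {R : realType} {S : Type} (SigS : set (set S))
    {I M : Type} (T : I -> M -> set M -> R) (theta : M -> S) (m : M)
  : set (kexpr K R S I) :=
  [set phi | wf_expr SigS phi /\ sem T theta phi m].

Definition Omega (K : Type) (R : realType) {S : Type} (SigS : set (set S))
    (I : Type) : set (set (kexpr K R S I)) :=
  [set w | exists (M : Type) (Sig : set (set M)) (T : I -> M -> set M -> R)
             (theta : M -> S),
           ktype_space K SigS Sig T theta /\ exists m : M, w = descr SigS T theta m].

Definition OmegaT (K : Type) (R : realType) {S : Type} (SigS : set (set S))
    (I : Type) := {w : set (kexpr K R S I) | Omega K R SigS I w}.

Definition brk {K : Type} {R : realType} {S : Type} {SigS : set (set S)}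
    {I : Type} (phi : kexpr K R S I) : set (OmegaT K R SigS I) :=
  [set w | proj1_sig w phi].

Definition SigOmega (K : Type) (R : realType) {S : Type} (SigS : set (set S))
    (I : Type) : set (set (OmegaT K R SigS I)) :=
  [set A | exists phi, wf_expr SigS phi /\ A = brk phi].

(** T_i^*(w)([phi]) = sup {p : B_i^p phi in w}; (well-definedness of this
    on [phi] is part of the paper's claim that the tuple is a type space;
    here the sup ranges over all phi with [phi] = A, and is sup(set0) = 0
    for A outside Sigma_Omega). *)
Definition Tstar (K : Type) (R : realType) {S : Type} (SigS : set (set S))
    (I : Type) (i : I) (w : OmegaT K R SigS I) (A : set (OmegaT K R SigS I)) : R :=
  sup [set p : R | exists phi, [/\ wf_expr SigS phi, A = brk phi &
                                  proj1_sig w (Bel i p phi)]].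

Lemma Omega_inhabited {K : Type} {R : realType} {S : Type} {SigS : set (set S)}
    {I : Type} (w : OmegaT K R SigS I) : inhabited S.
Proof.
case: w => w [M [Sig [T [theta [_ [m _]]]]]]; exact: (inhabits (theta m)).
Qed.

Definition thetastar (K : Type) (R : realType) {S : Type} (SigS : set (set S))
    (I : Type) (w : OmegaT K R SigS I) : S :=
  epsilon (Omega_inhabited w)
    (fun s => forall E, SigS E -> proj1_sig w (Atom E) -> E s).

Definition separates_points {S : Type} (SigS : set (set S)) :=
  forall s s' : S, s <> s' -> exists E, [/\ SigS E, E s & ~ E s'].

From mathcomp Require Import all_boot all_order all_algebra.
From mathcomp Require Import boolp classical_sets functions cardinality reals.
From Stdlib Require Import ClassicalEpsilon.
Import Order.TTheory GRing.Theory Num.Theory.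
Local Open Scope classical_set_scope.
Local Open Scope ring_scope.

(* Every element of Omega is the description D(m) of a state m of some
   kappa-type space, and by induction on expressions (a truth lemma) phi holds
   at D(m) in the canonical space iff phi holds at m.  Atoms: theta^*(D(m)) is
   theta(m) because the atoms true at m separate theta(m) from every other
   point.  Beliefs: the sets {p : B_i^p phi' in D(m)} for the various phi'
   with [phi'] = [phi] all coincide with [0, T_i(m)(phi^M)], so their sup is
   T_i(m)(phi^M). *)

Lemma sup_greatest (R : realType) (E : set R) (t : R) :
  E t -> ubound E t -> sup E = t.
Proof.
move=> Et ubEt; apply: le_anti; rewrite ge_sup //=; last by exists t.
by apply: ub_le_sup Et; exists t.
Qed.

Lemma fa_prob_ge0 {R : realType} {M : Type} {Sig : set (set M)} {mu : set M -> R}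
    (E : set M) :
  fa_prob Sig mu -> 0 <= mu E.
Proof.
case=> _ mu_ge0 _ mu_out; have [/mu_ge0 //|nSigE] := pselect (Sig E).
by rewrite mu_out.
Qed.

Lemma fa_prob_le1 {K : Type} {R : realType} {M : Type} {Sig : set (set M)}
    {mu : set M -> R} (E : set M) :
  kfield K [set: M] Sig -> fa_prob Sig mu -> mu E <= 1.
Proof.
move=> [_ _ _ SigC _] muP; have [mu1 _ muD mu_out] := muP.
have [SigE|nSigE] := pselect (Sig E); last by rewrite mu_out ?ler01.
have muEC : mu E + mu (~` E) = 1.
  rewrite -muD ?setICr ?setUCr // -setTD; exact: SigC.
by rewrite -muEC lerDl (fa_prob_ge0 _ muP).
Qed.

Section DescriptionsOfStates.
Context {K : Type} {R : realType} {S I M : Type} {SigS : set (set S)}.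
Context {Sig : set (set M)} {T : I -> M -> set M -> R} {theta : M -> S}.
Hypothesis tsM : ktype_space K SigS Sig T theta.

Definition descr_state (m : M) : OmegaT K R SigS I :=
  exist _ (descr SigS T theta m)
    (ex_intro _ M (ex_intro _ Sig (ex_intro _ T (ex_intro _ theta
      (conj tsM (ex_intro _ m erefl)))))).

Lemma sem_eq_of_brk_eq {phi psi : kexpr K R S I} :
  wf_expr SigS phi -> wf_expr SigS psi ->
  brk phi = brk psi :> set (OmegaT K R SigS I) ->
  sem T theta phi = sem T theta psi.
Proof.
move=> wf_phi wf_psi eq_brk; apply/funext => m; apply/propext.
have /= := congr1 (fun A => A (descr_state m)) eq_brk.
rewrite /descr /= => eq_descr; split=> [phim|psim].
  by move: (conj wf_phi phim); rewrite eq_descr => -[].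
by move: (conj wf_psi psim); rewrite -eq_descr => -[].
Qed.

Lemma thetastar_descr_state (m : M) :
  separates_points SigS -> thetastar K R SigS I (descr_state m) = theta m.
Proof.
move=> sepS; rewrite /thetastar.
set P := fun s => forall E, SigS E -> _ -> E s.
have /(epsilon_spec (Omega_inhabited _)) : exists s, P s.
  by exists (theta m) => E _ [].
set s := epsilon _ _ => Ps; have [//|s_neq] := pselect (s = theta m).
have [E [SigE Em nEs]] := sepS _ _ (nesym s_neq).
by case: nEs; apply: Ps => //; split=> //; exact: wf_Atom.
Qed.

Lemma Tstar_descr_state (i : I) (m : M) (psi : kexpr K R S I) :
  wf_expr SigS psi ->
  Tstar K R SigS I i (descr_state m) (brk psi) = T i m (sem T theta psi).
Proof.
move=> wf_psi; have [Sig_field mu_prob _ _ _] := tsM.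
set t := T i m _; have t_ge0 : 0 <= t by exact: fa_prob_ge0 (mu_prob i m).
have t_le1 : t <= 1 by exact: fa_prob_le1 Sig_field (mu_prob i m).
apply: sup_greatest.
  exists psi; split=> //; split=> //=.
  by apply: wf_Bel; rewrite ?t_ge0 ?t_le1.
move=> q [phi [wf_phi eq_brk [wf_Bel_phi]]] /=.
by rewrite (sem_eq_of_brk_eq wf_phi wf_psi (esym eq_brk)).
Qed.

End DescriptionsOfStates.

Lemma OmegaT_descr_state_ind (K : Type) (R : realType) (S I : Type)
    (SigS : set (set S)) (P : OmegaT K R SigS I -> Prop) :
  (forall M Sig T theta (tsM : ktype_space K SigS Sig T theta) (m : M),
     P (descr_state tsM m)) ->
  forall w, P w.
Proof.
move=> Pdescr [w Omega_w]; have [M [Sig [T [theta [tsM [m eq_w]]]]]] := Omega_w.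
suff -> : exist _ w Omega_w = descr_state tsM m by exact: Pdescr.
exact: eq_exist.
Qed.

Lemma OmegaT_wf {K : Type} {R : realType} {S I : Type} {SigS : set (set S)}
    {w : OmegaT K R SigS I} {phi : kexpr K R S I} :
  proj1_sig w phi -> wf_expr SigS phi.
Proof. by elim/OmegaT_descr_state_ind: w => M Sig T theta tsM m []. Qed.

Lemma sem_canonical_brk {K : Type} {R : realType} {S I : Type}
    {SigS : set (set S)} {phi : kexpr K R S I} :
  separates_points SigS -> wf_expr SigS phi ->
  sem (Tstar K R SigS I) (thetastar K R SigS I) phi = brk phi.
Proof.
move=> sepS; elim=> [E SigE|psi wf_psi IH|i p psi p01 wf_psi IH|A f A0 Ak wf_f IH];
  apply/funext; elim/OmegaT_descr_state_ind => M Sig T theta tsM m;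
  apply/propext; rewrite /brk /= /descr /=.
- rewrite thetastar_descr_state //.
  by split=> [Em|[]//]; split=> //; exact: wf_Atom.
- rewrite IH /brk /descr /=.
  split=> [nsem|[_ nsem] [_ /nsem//]].
  by split=> [|psim]; [exact: wf_Neg | exact: nsem].
- rewrite IH Tstar_descr_state //.
  by split=> [pT|[]//]; split=> //; exact: wf_Bel.
- split=> [semf|[_ semf] a Aa].
    split; first exact: wf_Conj.
    by move=> a Aa; move: (semf a Aa); rewrite IH // => -[].
  by rewrite IH // /brk /descr /=; split; [exact: wf_f | exact: semf].
Qed.

Theorem lemma6 (K : Type) (R : realType) (I : Type) (S : Type)
    (SigS : set (set S)) :
  regular_infinite_cardinal K ->
  inhabited I ->
  kfield K [set: S] SigS ->
  separates_points SigS ->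
  forall w : OmegaT K R SigS I,
    descr SigS (Tstar K R SigS I) (thetastar K R SigS I) w = proj1_sig w.
Proof.
move=> _ _ _ sepS w; apply/funext => phi; apply/propext; rewrite /descr /=.
split=> [[wf_phi]|wphi]; first by rewrite (sem_canonical_brk sepS wf_phi).
have wf_phi := OmegaT_wf wphi.
by split=> //; rewrite (sem_canonical_brk sepS wf_phi).
Qed.
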